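(* Let $G=(V,E)$ be a simple graph with $n=|V|$ nodes and minimum degree $d$, where $d$ is a constant independent of $n$. Let $l$ be an integer in $[1,d-1]$ and let $\phi>\frac{l}{d}$ be a fixed uniform threshold. Let $S\subseteq V$ be a uniformly random subset of size $k=o(n^{\frac{l}{l+1}})$. Then $$\Pr_{S}\left[\mathrm{inf}^\phi_G(S)=S\right]=1-o(1)$$ as $n\to\infty$.
   Context: A simple graph has no multi-edges and no self-loops. Uniform threshold cascading with threshold $\phi$: given an initial set $S$, all nodes of $S$ are infected; repeatedly, a not-yet-infected node becomes infected if at least a $\phi$ fraction of its neighbors are infected. The final infected set is $\mathrm{inf}^\phi_G(S)$. *)

From HB Require Import structures.
From mathcomp Require Import all_boot all_order all_algebra.
From mathcomp Require Import reals exp.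
Set Implicit Arguments. Unset Strict Implicit. Unset Printing Implicit Defensive.
Import Order.TTheory GRing.Theory Num.Theory.
Local Open Scope ring_scope.

Section Cascade.
Variable R : realType.
Variable T : finType.

Definition simple_graph (e : rel T) : Prop := symmetric e /\ irreflexive e.

Definition nbrs (e : rel T) (v : T) : {set T} := [set u | e v u].
Definition deg (e : rel T) (v : T) : nat := #|nbrs e v|.

Definition min_degree_is (e : rel T) (d : nat) : Prop :=
  (forall v, (d <= deg e v)%N) /\ (exists v, deg e v = d).

Definition cascade_step (phi : R) (e : rel T) (X : {set T}) : {set T} :=
  X :|: [set v | phi * (deg e v)%:R <= (#|nbrs e v :&: X|)%:R].

(* final infected set inf^phi_G(S): the process is monotone, so it stabilises
   after at most #|T| rounds. *)
Definition inf_set (phi : R) (e : rel T) (S : {set T}) : {set T} :=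
  iter #|T| (cascade_step phi e) S.

Definition prob_no_spread (phi : R) (e : rel T) (k : nat) : R :=
  (#|[set S : {set T} | (#|S| == k) && (inf_set phi e S == S)]|)%:R
  / ('C(#|T|, k))%:R.

End Cascade.

From HB Require Import structures.
From mathcomp Require Import all_boot all_order all_algebra.
From mathcomp Require Import reals exp.
From mathcomp Require Import zify ring lra.
Import Order.TTheory GRing.Theory Num.Theory.
Set Implicit Arguments. Unset Strict Implicit.

(** If [S] is not closed under the cascade, some node [v] has at least
    [floor (l * deg v / d) + 1 >= l + 1] neighbours in [S], because [phi > l / d].
    Take a union bound over the nodes [v] and over the subsets [A] of the
    neighbourhood of [v] of that size: there are at most
    [2 ^ deg v <= (2 ^ d) ^ |A|] of them, and a uniform [k]-subset contains a
    fixed [A] with probability at most [(k / n) ^ |A|].  Hence the cascade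
    spreads with probability at most [n * (2 ^ d * k / n) ^ (l + 1)], which is
    [O(k ^ (l + 1) / n ^ l)] and vanishes when [k = o(n ^ (l / (l + 1)))]. *)

Lemma bin_sub_ratio n k t : (t <= k <= n)%N ->
  ('C(n - t, k - t) * n ^ t <= 'C(n, k) * k ^ t)%N.
Proof.
elim: t => [|t IH] /andP[ltk lekn]; first by rewrite !subn0.
have {}IH : ('C(n - t, k - t) * n ^ t <= 'C(n, k) * k ^ t)%N by rewrite IH ?(ltnW ltk).
have diag := mul_bin_diag (n - t) (k - t.+1).
rewrite -subnS subnSK // in diag.
have n_t_gt0 : (0 < n - t)%N by rewrite subn_gt0 (leq_trans ltk).
rewrite -(leq_pmul2l n_t_gt0) mulnA diag !expnS.
set c := 'C(n - t, k - t); set C := 'C(n, k).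
have cross : ((k - t) * n <= (n - t) * k)%N by nia.
apply: (@leq_trans ((c * n ^ t) * ((k - t) * n))); first by apply: eq_leq; ring.
apply: (@leq_trans ((C * k ^ t) * ((k - t) * n))); first by rewrite leq_mul2r IH orbT.
apply: (@leq_trans ((C * k ^ t) * ((n - t) * k))); first by rewrite leq_mul2l cross orbT.
by apply: eq_leq; ring.
Qed.

Definition draws_containing (T : finType) k (A : {set T}) : {set {set T}} :=
  [set S : {set T} | (#|S| == k) && (A \subset S)].

Lemma card_draws_containing (T : finType) k (A : {set T}) : (#|A| <= k)%N ->
  #|draws_containing k A| = 'C(#|T| - #|A|, k - #|A|).
Proof.
move=> leAk.
have -> : draws_containing k A
    = (fun B => B :|: A) @: [set B : {set T} | B \subset ~: A & #|B| == k - #|A|].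
  apply/setP => S; rewrite inE; apply/andP/imsetP => [[/eqP cardS sAS] | [B]].
    exists (S :\: A); last by rewrite setUC setDE setUIr setUCr setIT (setUidPr sAS).
    by rewrite inE cardsD (setIidPr sAS) cardS eqxx andbT setDE subsetIr.
  rewrite inE => /andP[sBA /eqP cardB] ->; split; last exact: subsetUr.
  have disjBA : [disjoint B & A] by rewrite -(setCK A) -subsets_disjoint.
  by rewrite cardsU (disjoint_setI0 disjBA) cards0 subn0 cardB subnK.
rewrite card_in_imset ?cards_draws -?(cardsC A) ?addKn // => B1 B2.
rewrite !inE => /andP[sB1 _] /andP[sB2 _] /= eqB.
have dropA (B : {set T}) : B \subset ~: A -> (B :|: A) :\: A = B.
  by move=> sBA; rewrite setDUl setDv setU0 setDE (setIidPl sBA).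
by rewrite -(dropA _ sB1) eqB dropA.
Qed.

Lemma card_draws_containing_le (T : finType) k (A : {set T}) : (k <= #|T|)%N ->
  (#|draws_containing k A| * #|T| ^ #|A| <= 'C(#|T|, k) * k ^ #|A|)%N.
Proof.
move=> lekT; have [ltkA | leAk] := ltnP k #|A|.
  suff -> : draws_containing k A = set0 by rewrite cards0.
  apply/setP => S; rewrite !inE; apply/negbTE/andP => -[/eqP cardS sAS].
  by move: (subset_leq_card sAS); rewrite cardS leqNgt ltkA.
by rewrite card_draws_containing // bin_sub_ratio // leAk.
Qed.

Lemma card_bigcup_le (I U : finType) (P : pred I) (F : I -> {set U}) :
  (#|\bigcup_(i | P i) F i| <= \sum_(i | P i) #|F i|)%N.
Proof.
elim/big_rec2: _ => [|i n A _ IH]; first by rewrite cards0.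
exact: leq_trans (leq_card_setU _ _) (leq_add _ IH).
Qed.

Lemma exists_subset_card (T : finType) (B : {set T}) t : (t <= #|B|)%N ->
  exists2 A : {set T}, A \subset B & #|A| = t.
Proof.
rewrite -bin_gt0 -cards_draws => /card_gt0P[A].
by rewrite inE => /andP[sAB /eqP cardA]; exists A.
Qed.

Local Open Scope ring_scope.

Lemma powR_ratio_exprS (R : realType) (a : R) l : 0 <= a ->
  (a `^ (l%:R / l.+1%:R)) ^+ l.+1 = a ^+ l.
Proof.
by move=> a_ge0; rewrite -powR_mulrn ?powR_ge0 // -powRrM mulfVK ?pnatr_eq0 ?powR_mulrn.
Qed.

Lemma sparse_seed_bound (R : realType) (n k l : nat) (x : R) : (0 < n)%N ->
  k%:R < x * n%:R `^ (l%:R / l.+1%:R) -> n%:R * (k%:R / n%:R) ^+ l.+1 <= x ^+ l.+1.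
Proof.
move=> n_gt0 small; have n_pos : 0 < n%:R :> R by rewrite ltr0n.
have -> : n%:R * (k%:R / n%:R) ^+ l.+1 = k%:R ^+ l.+1 / n%:R ^+ l :> R.
  by rewrite expr_div_n [n%:R ^+ l.+1]exprS; field; rewrite expf_neq0 gt_eqF.
rewrite ler_pdivrMr ?exprn_gt0 // -[n%:R ^+ l](powR_ratio_exprS _ (ler0n R n)) -exprMn.
by rewrite lerXn2r ?nnegrE ?ler0n ?ltW // (le_lt_trans _ small).
Qed.

Lemma leq_of_scaled_ratio_le1 (R : realType) (c : R) (k n : nat) : (0 < n)%N ->
  1 <= c -> c * (k%:R / n%:R) <= 1 -> (k <= n)%N.
Proof.
move=> n_gt0 c_ge1 ckn_le1.
have : k%:R / n%:R <= 1 :> R.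
  by rewrite (le_trans _ ckn_le1) // ler_peMl // divr_ge0.
by rewrite ler_pdivrMr ?ltr0n // mul1r ler_nat.
Qed.

Section UnionBound.
Variables (R : realType) (T : finType) (e : rel T) (d l : nat) (phi : R).
Hypotheses (d_gt0 : (0 < d)%N) (l_gt0 : (0 < l)%N)
  (deg_ge : forall v, (d <= deg e v)%N) (phi_gt : l%:R / d%:R < phi).

(* Because [phi > l / d], a node is infected by [X] only if at least [quota v]
   of its neighbours are in [X]. *)
Definition quota v := (l * deg e v %/ d).+1.

Lemma quota_le_infected v (X : {set T}) :
  phi * (deg e v)%:R <= #|nbrs e v :&: X|%:R -> (quota v <= #|nbrs e v :&: X|)%N.
Proof.
move=> infected; rewrite /quota ltn_divLR // -(ltr_nat R) !natrM.
have deg_pos : 0 < (deg e v)%:R :> R by rewrite ltr0n (leq_trans d_gt0).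
have lt_phi : l%:R / d%:R * (deg e v)%:R < phi * (deg e v)%:R by rewrite ltr_pM2r.
by have := lt_le_trans lt_phi infected; rewrite mulrAC ltr_pdivrMr ?ltr0n.
Qed.

Lemma inf_set_fixed (S : {set T}) :
  (forall v, #|nbrs e v :&: S| < quota v)%N -> inf_set phi e S = S.
Proof.
move=> few; apply: iter_fix; apply/setUidPl/subsetP => v.
by rewrite inE => /quota_le_infected; rewrite leqNgt few.
Qed.

Lemma l_lt_quota v : (l < quota v)%N.
Proof. by rewrite ltnS leq_divRL // leq_mul2l deg_ge orbT. Qed.

Lemma deg_le_quota v : (deg e v <= d * quota v)%N.
Proof.
rewrite /quota mulnC ltnW // -ltn_divLR //.
by rewrite ltnS leq_div2r // leq_pmull.
Qed.

Definition quota_sets v := [set A : {set T} | (A \subset nbrs e v) && (#|A| == quota v)].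

Lemma card_quota_sets v : (#|quota_sets v| <= (2 ^ d) ^ quota v)%N.
Proof.
apply: (@leq_trans #|powerset (nbrs e v)|).
  by apply/subset_leq_card/subsetP => A; rewrite powersetE inE => /andP[].
by rewrite card_powerset -expnM leq_pexp2l // deg_le_quota.
Qed.

Definition spreading_draws k :=
  [set S : {set T} | (#|S| == k) && (inf_set phi e S != S)].

Lemma card_spreading_draws_le k :
  (#|spreading_draws k|
     <= \sum_v \sum_(A in quota_sets v) #|draws_containing k A|)%N.
Proof.
apply: (@leq_trans #|\bigcup_v \bigcup_(A in quota_sets v) draws_containing k A|).
  2: by apply: leq_trans (card_bigcup_le _ _) _; apply: leq_sum => v _; apply: card_bigcup_le.
apply/subset_leq_card/subsetP => S; rewrite inE => /andP[cardS spread].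
have [v crowded] : exists v, (quota v <= #|nbrs e v :&: S|)%N.
  apply/existsP; apply: contraR spread => /existsPn few.
  by rewrite inf_set_fixed // => v; rewrite ltnNge few.
have [A sA cardA] := exists_subset_card crowded.
apply/bigcupP; exists v => //; apply/bigcupP; exists A.
  by rewrite inE (subset_trans sA (subsetIl _ _)) cardA eqxx.
by rewrite inE cardS (subset_trans sA (subsetIr _ _)).
Qed.

Lemma card_spreading_draws_ler k : (0 < #|T|)%N ->
    (2 ^ d)%:R * (k%:R / #|T|%:R) <= 1 :> R ->
  #|spreading_draws k|%:R
    <= 'C(#|T|, k)%:R * (#|T|%:R * ((2 ^ d)%:R * (k%:R / #|T|%:R)) ^+ l.+1) :> R.
Proof.
move=> T_gt0; set n := #|T|; set x := k%:R / n%:R; set y := _ * x => y_le1.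
have n_pos : 0 < n%:R :> R by rewrite ltr0n.
have x_ge0 : 0 <= x by rewrite divr_ge0.
have y_ge0 : 0 <= y by rewrite mulr_ge0.
have k_le_n : (k <= n)%N.
  by rewrite (leq_of_scaled_ratio_le1 T_gt0 _ y_le1) // ler1n expn_gt0.
have contained (A : {set T}) : #|draws_containing k A|%:R <= 'C(n, k)%:R * x ^+ #|A| :> R.
  have := card_draws_containing_le A k_le_n; rewrite -(ler_nat R) !natrM !natrX.
  by rewrite expr_div_n mulrA ler_pdivlMr // exprn_gt0.
have per_node v :
    \sum_(A in quota_sets v) #|draws_containing k A|%:R <= 'C(n, k)%:R * y ^+ l.+1 :> R.
  apply: le_trans (ler_sum _ (fun A _ => contained A)) _.
  rewrite (eq_bigr (fun _ => 'C(n, k)%:R * x ^+ quota v)); last first.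
    by move=> A; rewrite inE => /andP[_ /eqP ->].
  rewrite sumr_const -[_ *+ #|_|]mulr_natl mulrCA ler_wpM2l //.
  apply: le_trans (_ : ((2 ^ d) ^ quota v)%N%:R * x ^+ quota v <= _).
    by rewrite ler_wpM2r ?exprn_ge0 // ler_nat card_quota_sets.
  by rewrite natrX -exprMn ler_wiXn2l // l_lt_quota.
apply: le_trans (_ : (\sum_v \sum_(A in quota_sets v) #|draws_containing k A|)%N%:R <= _).
  by rewrite ler_nat card_spreading_draws_le.
rewrite natr_sum [n%:R * _]mulrC mulrA mulr_natr -sumr_const.
by apply: ler_sum => v _; rewrite natr_sum per_node.
Qed.

Lemma prob_no_spread_ge k : (0 < #|T|)%N ->
    (2 ^ d)%:R * (k%:R / #|T|%:R) <= 1 :> R ->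
  1 - #|T|%:R * ((2 ^ d)%:R * (k%:R / #|T|%:R)) ^+ l.+1 <= prob_no_spread phi e k.
Proof.
move=> T_gt0 y_le1; have := card_spreading_draws_ler T_gt0 y_le1.
set n := #|T| => spread.
have split : (#|[set S : {set T} | (#|S| == k) && (inf_set phi e S == S)]|
    + #|spreading_draws k|)%N = 'C(n, k).
  rewrite -card_draws -[RHS](cardsID [set S : {set T} | inf_set phi e S == S]).
  by congr (_ + _)%N; apply: eq_card => S; rewrite !inE andbC.
have C_pos : 0 < 'C(n, k)%:R :> R.
  by rewrite ltr0n bin_gt0 (leq_of_scaled_ratio_le1 T_gt0 _ y_le1) // ler1n expn_gt0.
rewrite /prob_no_spread -/n ler_pdivlMr // -split natrD.
rewrite -split natrD in spread C_pos.
nra.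
Qed.

Lemma prob_no_spread_ge_half k (b : R) : (0 < #|T|)%N -> 0 < b <= 1 ->
    k%:R / #|T|%:R `^ (l%:R / l.+1%:R) < b / (2 * (2 ^ d)%:R) ->
  1 - b / 2 <= prob_no_spread phi e k.
Proof.
move=> T_gt0 /andP[b_pos b_le1]; set n := #|T|; set c : R := (2 ^ d)%:R.
set x := b / (2 * c); rewrite ltr_pdivrMr ?powR_gt0 ?ltr0n // => small.
have c_pos : 0 < c by rewrite ltr0n expn_gt0.
have cx : c * x = b / 2 by rewrite /x; field; rewrite gt_eqF.
have k_le : k%:R <= x * n%:R.
  apply/ltW/(lt_le_trans small)/ler_wpM2l; first by rewrite divr_ge0 ?mulr_ge0 ?ltW.
  by rewrite ler1_powR ?ler1n // ler_pdivrMr ?ltr0n // mul1r ler_nat.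
have y_le1 : c * (k%:R / n%:R) <= 1.
  apply: le_trans (_ : b / 2 <= 1); last by rewrite ler_pdivrMr //; lra.
  by rewrite -cx ler_wpM2l ?(ltW c_pos) // ler_pdivrMr ?ltr0n.
apply: le_trans (prob_no_spread_ge T_gt0 y_le1).
rewrite lerD2l lerN2 exprMn mulrCA.
apply: le_trans (ler_wpM2l (exprn_ge0 _ (ltW c_pos)) (sparse_seed_bound T_gt0 small)) _.
by rewrite -exprMn cx -[X in _ <= X]expr1 ler_wiXn2l //; lra.
Qed.

End UnionBound.

Unset Implicit Arguments.

Theorem theorem8 (R : realType) (d l : nat) (phi : R)
  (N : nat -> nat) (G : forall m : nat, rel 'I_(N m)) (k : nat -> nat) :
  (1 <= l)%N -> (l <= d - 1)%N ->
  l%:R / d%:R < phi ->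
  (forall m, simple_graph (G m)) ->
  (forall m, min_degree_is (G m) d) ->
  (forall B : nat, exists M : nat, forall m, (M <= m)%N -> (B <= N m)%N) ->
  (forall eps : R, 0 < eps -> exists M : nat, forall m, (M <= m)%N ->
      (k m)%:R / ((N m)%:R `^ (l%:R / (l.+1)%:R)) < eps) ->
  forall eps : R, 0 < eps -> exists M : nat, forall m, (M <= m)%N ->
      1 - eps < prob_no_spread phi (G m) (k m).
Proof.
move=> l_gt0 l_lt_d phi_gt _ min_deg n_unbounded k_sparse eps eps_gt0.
have d_gt0 : (0 < d)%N by lia.
set b := Num.min 1 eps.
have b_pos : 0 < b by rewrite lt_min ltr01 eps_gt0.
have b_le1 : b <= 1 by rewrite ge_min lexx.
have b_le_eps : b <= eps by rewrite ge_min lexx orbT.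
have [|M1 sparse] := k_sparse (b / (2 * (2 ^ d)%:R)).
  by rewrite divr_gt0 // mulr_gt0 // ltr0n expn_gt0.
have [M2 large] := n_unbounded 1%N.
exists (maxn M1 M2) => m; rewrite geq_max => /andP[/sparse small /large n_gt0].
have := prob_no_spread_ge_half d_gt0 l_gt0 (min_deg m).1 phi_gt.
rewrite card_ord => /(_ (k m) b n_gt0); rewrite b_pos b_le1 => /(_ isT small).
by apply: lt_le_trans; lra.
Qed.
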